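(* Let $n\ge m\ge1$ and let $n_1,\dots,n_m$ be positive integers with $\sum_{k=1}^m n_k=n$. Then for every $t\in[0,1]$, $$\sum_{k=1}^m\sum_{i=0}^{n_k-1}\log\Bigl(1-t\frac{i}{n_k}\Bigr)-\sum_{i=0}^{n-1}\log\Bigl(1-t\frac{i}{n}\Bigr)\ge\frac{m-1}{2}\,t.$$ *)

From mathcomp Require Import all_boot all_order all_algebra.
From mathcomp Require Import reals exp.

(** Collect the [n] points [i / n_k] ([0 <= i < n_k], [k < m]) into one
    multiset and sort it as [y_0 <= ... <= y_(n-1)].  For each [j < n] more
    than [j] of these points lie in [[0, j/n]] (the block [k] contributes
    [floor (j n_k / n) + 1] of them), so [y_j <= j/n].  Since
    [x |-> ln (1 - t x)] decreases with slope at most [-t] on [[0, 1)],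
    [ln (1 - t y_j) - ln (1 - t j/n) >= t (j/n - y_j)], and summing over [j]
    gives [t ((n - 1)/2 - (n - m)/2) = t (m - 1)/2]. *)

From mathcomp Require Import all_boot all_order all_algebra.
From mathcomp Require Import reals exp ring lra.
Import Order.TTheory GRing.Theory Num.Theory.
Local Open Scope ring_scope.

Lemma sorted_nth_le_count d (T : orderType d) (x0 a : T) (s : seq T) (j : nat) :
  sorted <=%O s -> (j < count (<= a)%O s)%N -> (nth x0 s j <= a)%O.
Proof.
elim: s j => [|x s IH] [|j] //= s_sorted.
  move=> count_gt0; have /hasP[y] : has (<= a)%O (x :: s) by rewrite has_count.
  rewrite inE => /predU1P[-> //|y_s]; apply: le_trans.
  exact: allP (order_path_min le_trans s_sorted) y y_s.
move=> lt_j_count; apply: IH; first exact: path_sorted s_sorted.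
by case: (x <= a)%O lt_j_count; rewrite ?add1n ?add0n ?ltnS // => /ltnW.
Qed.

Lemma ltn_sum_divn_succ (I : finType) (w : I -> nat) (j : nat) :
  (0 < \sum_k w k)%N -> (j < \sum_k (j * w k %/ \sum_k w k).+1)%N.
Proof.
set n := (\sum_k w k)%N => n_gt0.
have [k0 _] : exists k0 : I, true.
  by move: n_gt0; rewrite lt0n sum_nat_eq0 => /forallPn[k]; exists k.
rewrite -(ltn_pmul2r n_gt0) big_distrl /=.
apply: (@leq_trans (\sum_k (j * w k + 1))); last first.
  by apply: leq_sum => k _; rewrite addn1 ltn_ceil.
rewrite big_split /= -big_distrr /= sum_nat_const muln1 -addn1 leq_add2l.
by apply/card_gt0P; exists k0.
Qed.

Section Logarithm.
Context {R : realType}.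

Lemma ln_subr_ge (u v : R) : 0 < v -> v <= u -> u <= 1 -> u - v <= ln u - ln v.
Proof.
move=> v_gt0 le_vu le_u1; have u_gt0 := lt_le_trans v_gt0 le_vu.
have ln_vu : ln (v / u) <= v / u - 1.
  have := @le_ln1Dx R (v / u - 1); rewrite [1 + _]addrC subrK; apply.
  by rewrite ltrBrDr addNr divr_gt0.
rewrite ln_div ?posrE // in ln_vu.
suff : v / u - 1 <= v - u by lra.
rewrite -[X in _ - X](divff (lt0r_neq0 u_gt0)) -mulrBl ler_pdivrMr //; nra.
Qed.

Lemma mulr_subr_le_ln1B (t x y : R) : 0 <= t -> 0 <= x -> x <= y -> t * y < 1 ->
  t * (y - x) <= ln (1 - t * x) - ln (1 - t * y).
Proof.
move=> t_ge0 x_ge0 le_xy ty_lt1.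
have le_txy : t * x <= t * y by rewrite ler_wpM2l.
have -> : t * (y - x) = (1 - t * x) - (1 - t * y) by ring.
apply: ln_subr_ge; first by rewrite subr_gt0.
- by rewrite lerB.
- by rewrite gerBl mulr_ge0.
Qed.

End Logarithm.

Section Ratios.
Variable R : realFieldType.

Definition ratios (N : nat) : seq R := [seq i%:R / N%:R | i <- iota 0 N].

Lemma big_ratios (N : nat) (F : R -> R) :
  \sum_(x <- ratios N) F x = \sum_(i < N) F (i%:R / N%:R).
Proof.
by rewrite big_map -(big_mkord xpredT (fun i => F (i%:R / N%:R))) /index_iota subn0.
Qed.

Lemma sum_ord_ratios (N : nat) : (0 < N)%N ->
  \sum_(i < N) (i%:R / N%:R : R) = (N%:R - 1) / 2.
Proof.
move=> N_gt0; rewrite -mulr_suml.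
have sum_ord M : \sum_(i < M) (i%:R : R) = M%:R * (M%:R - 1) / 2.
  elim: M => [|M IH]; first by rewrite big_ord0 !mul0r.
  by rewrite big_ord_recr /= IH -addn1 natrD; field.
by rewrite sum_ord; field; rewrite pnatr_eq0 -lt0n.
Qed.

Lemma ratios_ge0 (N : nat) (x : R) : x \in ratios N -> 0 <= x.
Proof. by case/mapP => i _ ->; rewrite divr_ge0 ?ler0n. Qed.

Lemma count_ratios_le (N n j : nat) : (0 < N)%N -> (j < n)%N ->
  ((j * N %/ n).+1 <= count (<= (j%:R / n%:R : R)) (ratios N))%N.
Proof.
move=> N_gt0 lt_jn; have n_gt0 : (0 < n)%N by apply: leq_ltn_trans lt_jn.
set q := (j * N %/ n)%N.
have lt_qN : (q < N)%N by rewrite ltn_divLR // mulnC ltn_pmul2l.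
rewrite /ratios; have -> : iota 0 N = iota 0 q.+1 ++ iota q.+1 (N - q.+1).
  by rewrite -iotaD subnKC.
rewrite map_cat count_cat count_map.
apply: leq_trans (leq_addr _ _).
rewrite (eq_in_count (a2 := predT)) ?count_predT ?size_iota //.
move=> i; rewrite mem_iota add0n ltnS leq_divRL // => /andP[_ le_iN_jN] /=.
rewrite ler_pdivrMr ?ltr0n // mulrAC ler_pdivlMr ?ltr0n //.
by rewrite -!natrM ler_nat.
Qed.

Section Union.
Context {I : finType} (w : I -> nat).
Hypothesis w_gt0 : forall k, (0 < w k)%N.

Definition ratio_union : seq R := flatten [seq ratios (w k) | k <- index_enum I].

Lemma big_ratio_union (F : R -> R) :
  \sum_(x <- ratio_union) F x = \sum_k \sum_(i < w k) F (i%:R / (w k)%:R).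
Proof.
by rewrite big_flatten big_map; apply: eq_bigr => k _; rewrite big_ratios.
Qed.

Lemma size_ratio_union : size ratio_union = (\sum_k w k)%N.
Proof.
rewrite size_flatten /shape -map_comp sumnE big_map.
by apply: eq_bigr => k _; rewrite /= size_map size_iota.
Qed.

Lemma ratio_union_ge0 (x : R) : x \in ratio_union -> 0 <= x.
Proof. by case/flattenP => _ /mapP[k _ ->]; apply: ratios_ge0. Qed.

Lemma sum_ratio_union :
  \sum_(x <- ratio_union) x = ((\sum_k w k)%:R - #|I|%:R) / 2.
Proof.
rewrite big_ratio_union (eq_bigr _ (fun k _ => sum_ord_ratios _ (w_gt0 k))).
by rewrite -mulr_suml sumrB -natr_sum sumr_const.
Qed.

Lemma nth_sort_ratio_union_le (j : nat) :
  (j < \sum_k w k)%N ->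
  nth 0 (sort <=%O ratio_union) j <= j%:R / (\sum_k w k)%:R.
Proof.
set n := (\sum_k w k)%N => lt_jn.
apply: sorted_nth_le_count; first by apply: sort_sorted; exact: le_total.
rewrite (permP (permEl (perm_sort _ _))) count_flatten sumnE !big_map.
have n_gt0 : (0 < n)%N by apply: leq_ltn_trans lt_jn.
apply: leq_trans (@ltn_sum_divn_succ _ w j n_gt0) _.
by apply: leq_sum => k _; apply: count_ratios_le.
Qed.

End Union.
End Ratios.

Theorem lemma7p13 (R : realType) (n m : nat) (nk : 'I_m -> nat)
  (hm : (1 <= m)%N) (hmn : (m <= n)%N)
  (hpos : forall k : 'I_m, (0 < nk k)%N)
  (hsum : (\sum_(k < m) nk k)%N = n)
  (t : R) (ht0 : 0 <= t) (ht1 : t <= 1) :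
  (m%:R - 1) / 2 * t <=
    \sum_(k < m) \sum_(i < nk k) ln (1 - t * (i%:R / (nk k)%:R))
    - \sum_(i < n) ln (1 - t * (i%:R / n%:R)).
Proof.
set y := sort <=%O (ratio_union R nk).
have perm_y : perm_eq y (ratio_union R nk) by rewrite perm_sort.
have sum_y (F : R -> R) :
    \sum_(j < n) F (nth 0 y j) = \sum_(x <- ratio_union R nk) F x.
  rewrite -(perm_big _ perm_y) (big_nth 0) big_mkord.
  by rewrite size_sort size_ratio_union hsum.
have y_le (j : 'I_n) : nth 0 y j <= j%:R / n%:R.
  by have := nth_sort_ratio_union_le R nk hpos j; rewrite hsum; apply.
have y_ge0 (j : 'I_n) : 0 <= nth 0 y j.
  apply: (@ratio_union_ge0 R _ nk); rewrite -(perm_mem perm_y) mem_nth //.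
  by rewrite size_sort size_ratio_union hsum.
have step (j : 'I_n) : t * (j%:R / n%:R - nth 0 y j) <=
    ln (1 - t * nth 0 y j) - ln (1 - t * (j%:R / n%:R)).
  apply: (mulr_subr_le_ln1B _ _ _ ht0 (y_ge0 j) (y_le j)).
  apply: (@le_lt_trans _ _ (j%:R / n%:R)); first by rewrite ler_piMl ?divr_ge0.
  by rewrite ltr_pdivrMr ?mul1r ?ltr_nat ?ltr0n // (leq_ltn_trans _ (ltn_ord j)).
rewrite -(big_ratio_union R nk (fun x => ln (1 - t * x))) -sum_y -sumrB.
apply: le_trans (ler_sum _ (fun j _ => step j)).
have n_gt0 : (0 < n)%N by apply: leq_trans hmn.
rewrite -mulr_sumr sumrB sum_ord_ratios // (sum_y id) sum_ratio_union //.
by rewrite hsum card_ord; lra.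
Qed.
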